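(* Let $G$ be a finitely generated group acting on a set $X$. Then the following are equivalent: (1) the action $G\curvearrowright X$ is amenable; (2) for every configuration pair $(\mathfrak{g},\mathcal{E})$ for this action, the system of configuration equations $\mathrm{Eq}(\mathfrak{g},\mathcal{E};X)$ has a normalized solution.
   Context: An action $G\curvearrowright X$ is amenable if there is a finitely additive measure $\mu$ on all subsets of $X$ with values in $[0,\infty]$, with $\mu(gE)=\mu(E)$ for all $E\subseteq X$, $g\in G$, and $\mu(X)=1$. A configuration pair $(\mathfrak{g},\mathcal{E})$ consists of an ordered tuple $\mathfrak{g}=(g_1,\dots,g_n)$ of elements of $G$ and a finite partition $\mathcal{E}=\{E_1,\dots,E_m\}$ of $X$. A configuration related to $(\mathfrak{g},\mathcal{E})$ is a tuple $C=(C_0,C_1,\dots,C_n)\in\{1,\dots,m\}^{n+1}$ for which there exists $x\in E_{C_0}$ with $g_i\cdot x\in E_{C_i}$ for all $i=1,\dots,n$; the set of these is $\mathrm{Con}(\mathfrak{g},\mathcal{E};X)$. The configuration equations $\mathrm{Eq}(\mathfrak{g},\mathcal{E};X)$ are the linear equations in unknowns $(f_C)_{C\in \mathrm{Con}(\mathfrak{g},\mathcal{E};X)}$: for every $j\in\{1,\dots,n\}$ and $i\in\{1,\dots,m\}$, $\sum\{f_C: C_j=i\}=\sum\{f_C: C_0=i\}$. A normalized solution is a solution with all $f_C\ge 0$ and $\sum_C f_C=1$. *)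

From HB Require Import structures.
From mathcomp Require Import all_boot all_order all_algebra.
From mathcomp Require Import boolp classical_sets constructive_ereal reals Rstruct.
From Stdlib Require Import Rdefinitions.

Set Implicit Arguments.
Unset Strict Implicit.
Unset Printing Implicit Defensive.

Import Order.TTheory GRing.Theory Num.Theory.

Inductive generated (G : groupType) (S : seq G) : G -> Prop :=
  | gen_in g : g \in S -> generated S g
  | gen_one : generated S 1%g
  | gen_mul g h : generated S g -> generated S h -> generated S (g * h)%g
  | gen_inv g : generated S g -> generated S (g^-1)%g.

Definition finitely_generated (G : groupType) : Prop :=
  exists S : seq G, forall g : G, generated S g.

Definition is_action (G : groupType) (X : Type) (act : G -> X -> X) : Prop :=
  (forall x, act 1%g x = x) /\
  (forall g h x, act (g * h)%g x = act g (act h x)).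

Local Open Scope classical_set_scope.
Local Open Scope ereal_scope.

Definition finitely_additive_measure (X : Type) (mu : set X -> \bar R) : Prop :=
  [/\ mu set0 = 0,
      (forall E, 0 <= mu E) &
      (forall A B, A `&` B = set0 -> mu (A `|` B) = mu A + mu B)].

Definition amenable_action (G : groupType) (X : Type) (act : G -> X -> X) : Prop :=
  exists mu : set X -> \bar R,
    [/\ finitely_additive_measure mu,
        (forall (g : G) (E : set X), mu [set act g x | x in E] = mu E) &
        mu setT = 1].

Local Close Scope ereal_scope.
Local Close Scope classical_set_scope.

(* A configuration pair (g, E): g = (g_1, ..., g_n) is given by
   g : 'I_n -> G (g_(j+1) = g j), and the finite partition
   E = {E_1, ..., E_m} of X is given by the labelling part : X -> 'I_m with
   E_(i+1) = part^-1 (i); we require every piece to be nonempty. *)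
Definition is_partition (X : Type) (m : nat) (part : X -> 'I_m) : Prop :=
  forall i : 'I_m, exists x : X, part x = i.

(* A tuple C = (C_0, C_1, ..., C_n) is coded by C : {ffun 'I_n.+1 -> 'I_m},
   C_0 = C ord0 and C_j = C (lift ord0 (j-1)) for j = 1..n. *)
Definition is_configuration (G : groupType) (X : Type) (act : G -> X -> X)
    (n m : nat) (g : 'I_n -> G) (part : X -> 'I_m)
    (C : {ffun 'I_n.+1 -> 'I_m}) : Prop :=
  exists x : X, part x = C ord0 /\
    forall j : 'I_n, part (act (g j) x) = C (lift ord0 j).

Definition Con (G : groupType) (X : Type) (act : G -> X -> X)
    (n m : nat) (g : 'I_n -> G) (part : X -> 'I_m) : {set {ffun 'I_n.+1 -> 'I_m}} :=
  [set C | `[< is_configuration act g part C >] ].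

Local Open Scope ring_scope.

(* f = (f_C)_{C in Con} is a normalized solution of Eq(g, E; X)
   (values of f outside Con are irrelevant). *)
Definition normalized_solution (G : groupType) (X : Type) (act : G -> X -> X)
    (n m : nat) (g : 'I_n -> G) (part : X -> 'I_m)
    (f : {ffun 'I_n.+1 -> 'I_m} -> R) : Prop :=
  [/\ (forall j : 'I_n, forall i : 'I_m,
          \sum_(C in Con act g part | C (lift ord0 j) == i) f C
          = \sum_(C in Con act g part | C ord0 == i) f C),
      (forall C, C \in Con act g part -> 0 <= f C) &
      \sum_(C in Con act g part) f C = 1].

Definition has_normalized_solution (G : groupType) (X : Type) (act : G -> X -> X)
    (n m : nat) (g : 'I_n -> G) (part : X -> 'I_m) : Prop :=
  exists f : {ffun 'I_n.+1 -> 'I_m} -> R, normalized_solution act g part f.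

From HB Require Import structures.
From mathcomp Require Import all_boot all_order all_algebra.
From mathcomp Require Import boolp classical_sets constructive_ereal reals Rstruct.
From mathcomp Require Import topology normedtype numfun Rstruct_topology.
From Stdlib Require Import Rdefinitions.

(* An invariant mean mu gives the normalized solution f_C = mu {x | the
   configuration of x is C}: the j-th equation is the invariance of mu under
   g_j.  Conversely, given finitely many pairs (h_k, E_k), take the partition of
   X into the atoms of the Boolean algebra generated by the E_k and solve the
   configuration equations for the tuple (h_k^-1).  Choosing one point of X per
   configuration turns the solution into a convex combination of Dirac masses,
   which is a finitely additive probability, and the equations say exactly that
   it gives h_k E_k and E_k the same mass.  Finitely additive probabilities
   form a compact subset of [0,1]^(2^X), and each invariance condition is
   closed, so by the finite intersection property one of them is invariant
   under the whole group. *)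

Set Implicit Arguments.
Unset Strict Implicit.
Unset Printing Implicit Defensive.
Import Order.TTheory GRing.Theory Num.Theory.
Import ArrowAsProduct.
Local Open Scope classical_set_scope.
Local Open Scope ring_scope.

Lemma sum_mul_fibers (S : comPzSemiRingType) (I J : finType) (A : {pred I})
    (key : I -> J) (f : I -> S) (h : J -> S) :
  \sum_(i in A) f i * h (key i) =
  \sum_(j : J) h j * \sum_(i in A | key i == j) f i.
Proof.
rewrite (partition_big key predT) //=; apply: eq_bigr => j _.
by rewrite mulr_sumr; apply: eq_bigr => i /andP[_ /eqP ->]; rewrite mulrC.
Qed.

Lemma indic_setU_disjoint (T : Type) (A B : set T) (x : T) :
  A `&` B = set0 -> \1_(A `|` B) x = \1_A x + \1_B x :> R.
Proof.
move=> AB0; rewrite !indicE in_setU.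
have [xA|xA] := boolP (x \in A); have [xB|xB] := boolP (x \in B);
  rewrite /= ?addr0 ?add0r //.
have : (A `&` B) x by split; rewrite -in_setE.
by rewrite AB0.
Qed.

Section Means.
Variable X : Type.

Definition mean (mu : set X -> R) : Prop :=
  [/\ forall A, 0 <= mu A, mu setT = 1 &
      forall A B, A `&` B = set0 -> mu (A `|` B) = mu A + mu B].

Variable mu : set X -> R.
Hypothesis mu_mean : mean mu.

Lemma mean0 : mu set0 = 0.
Proof.
case: mu_mean => _ _ muD.
by apply: (@addrI _ (mu set0)); rewrite addr0 -muD ?setU0 ?setI0.
Qed.

Lemma mean_le1 A : mu A <= 1.
Proof.
case: mu_mean => mu_ge0 muT muD.
by rewrite -muT -(setUCr A) muD ?setICr // lerDl.
Qed.

Lemma mean_sum_fibers (I : finType) (key : X -> I) (P : pred I) :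
  \sum_(i | P i) mu [set x | key x = i] = mu [set x | P (key x)].
Proof.
case: mu_mean => _ _ muD.
have sum_seq s : uniq s ->
    \sum_(i <- s) mu [set x | key x = i] = mu [set x | key x \in s].
  elim: s => [_|i s IH /= /andP[iNs s_uniq]].
    by rewrite big_nil -mean0; congr mu; apply/seteqP; split => x.
  rewrite big_cons IH // -muD.
    by congr mu; apply/seteqP; split => x /=; rewrite in_cons;
      [case=> [->|->]; rewrite ?eqxx ?orbT | case/predU1P; [left|right]].
  by apply/seteqP; split => x //= [kxi xs]; move: iNs; rewrite -kxi xs.
rewrite -big_filter sum_seq ?filter_uniq ?index_enum_uniq //.
by congr mu; apply/seteqP; split => x /=;
  rewrite mem_filter mem_index_enum andbT.
Qed.

End Means.

Definition dirac_combination (X : Type) (I : finType) (D : {pred I})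
    (f : I -> R) (w : I -> X) (A : set X) : R :=
  \sum_(i in D) f i * \1_A (w i).

Lemma dirac_combination_mean (X : Type) (I : finType) (D : {pred I})
    (f : I -> R) (w : I -> X) :
  (forall i, i \in D -> 0 <= f i) -> \sum_(i in D) f i = 1 ->
  mean (dirac_combination D f w).
Proof.
move=> f_ge0 f_sum1; split.
- by move=> A; apply: sumr_ge0 => i iD; rewrite mulr_ge0 ?f_ge0.
- by rewrite -f_sum1; apply: eq_bigr => i _; rewrite indicT mulr1.
- move=> A B AB0; rewrite -big_split; apply: eq_bigr => i _.
  by rewrite indic_setU_disjoint // mulrDr.
Qed.

Lemma amenable_actionP (G : groupType) (X : Type) (act : G -> X -> X) :
  amenable_action act <->
  exists2 mu : set X -> R, mean mu &
    forall g E, mu [set act g x | x in E] = mu E.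
Proof.
split=> [[mu [[mu0 mu_ge0 muD] mu_inv muT]]|[mu [mu_ge0 muT muD] mu_inv]].
- have mu_le1 A : (mu A <= 1)%E.
    by rewrite -muT -(setUCr A) muD ?setICr // leeDl.
  have muE A : mu A = (fine (mu A))%:E.
    by rewrite fineK // ge0_fin_numE // (le_lt_trans (mu_le1 A)) ?ltry.
  exists (fun A => fine (mu A)); last by move=> g E; rewrite mu_inv.
  split=> [A||A B AB0]; first by rewrite -lee_fin -muE.
    by rewrite muT.
  by apply: EFin_inj; rewrite EFinD -!muE muD.
- have mu0 : mu set0 = 0 by apply: mean0.
  exists (fun A => (mu A)%:E); split.
  + by split=> [||A B AB0]; rewrite ?mu0 ?lee_fin ?muD ?EFinD.
  + by move=> g E; rewrite mu_inv.
  + by rewrite muT.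
Qed.

Section Configurations.
Variables (G : groupType) (X : Type) (act : G -> X -> X).
Variables (n m : nat) (g : 'I_n -> G) (part : X -> 'I_m).

Definition configuration (x : X) : {ffun 'I_n.+1 -> 'I_m} :=
  [ffun k => if unlift ord0 k is Some j then part (act (g j) x) else part x].

Lemma configuration0 x : configuration x ord0 = part x.
Proof. by rewrite ffunE unlift_none. Qed.

Lemma configurationS x j : configuration x (lift ord0 j) = part (act (g j) x).
Proof. by rewrite ffunE liftK. Qed.

Lemma ConP C : reflect (exists x, configuration x = C) (C \in Con act g part).
Proof.
rewrite inE; apply: (iffP (asboolP _)) => [[x [x0 xS]]|[x <-]].
  exists x; apply/ffunP => k; case: (unliftP ord0 k) => [j ->|->].
    by rewrite configurationS.
  by rewrite configuration0.
by exists x; split=> [|j]; rewrite ?configuration0 ?configurationS.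
Qed.

Lemma configuration_Con x : configuration x \in Con act g part.
Proof. by apply/ConP; exists x. Qed.

Lemma solution_dirac_combination_invariant (f : {ffun 'I_n.+1 -> 'I_m} -> R)
    (w : {ffun 'I_n.+1 -> 'I_m} -> X) :
  normalized_solution act g part f ->
  (forall C, C \in Con act g part -> configuration (w C) = C) ->
  forall j (P : pred 'I_m),
  dirac_combination (Con act g part) f w [set x | P (part (act (g j) x))] =
  dirac_combination (Con act g part) f w [set x | P (part x)].
Proof.
move=> [f_eq _ _] wP j P; rewrite /dirac_combination.
have indicP C k : C \in Con act g part ->
    \1_[set x | P (configuration x k)] (w C) = (P (C k))%:R :> R.
  move=> /wP wC; rewrite indicE -{2}wC; congr (nat_of_bool _)%:R.
  by apply/idP/idP; rewrite inE.
rewrite (eq_bigr (fun C => f C * (P (C (lift ord0 j)))%:R)); last first.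
  by move=> C /indicP <-; congr (_ * \1_ _ _); apply/seteqP; split => x /=;
    rewrite configurationS.
rewrite [RHS](eq_bigr (fun C => f C * (P (C ord0))%:R)); last first.
  by move=> C /indicP <-; congr (_ * \1_ _ _); apply/seteqP; split => x /=;
    rewrite configuration0.
rewrite !(sum_mul_fibers _ _ f (fun i => (P i)%:R)).
by apply: eq_bigr => i _; rewrite f_eq.
Qed.

Lemma has_normalized_solution_inhabited :
  has_normalized_solution act g part -> inhabited X.
Proof.
case=> f [_ _ f_sum1].
case: (set_0Vmem (Con act g part)) => [Con0|[C /ConP[x _]]].
  by move: f_sum1; rewrite Con0 big_set0 => /eqP; rewrite eq_sym oner_eq0.
by exists.
Qed.

Hypothesis hact : is_action act.

Lemma image_actE (h : G) (E : set X) :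
  [set act h x | x in E] = [set y | E (act h^-1 y)].
Proof.
case: hact => act1 actM; apply/seteqP; split => y /=.
  by case=> x Ex <-; rewrite -actM mulVg act1.
by move=> Ey; exists (act h^-1 y) => //; rewrite -actM mulgV act1.
Qed.

Lemma invariant_mean_normalized_solution (mu : set X -> R) :
  mean mu -> (forall h E, mu [set act h x | x in E] = mu E) ->
  has_normalized_solution act g part.
Proof.
move=> mu_mean mu_inv.
have [mu_ge0 muT _] := mu_mean.
exists (fun C => mu [set x | configuration x = C]); split.
- move=> j i; rewrite !mean_sum_fibers //.
  rewrite -[RHS](mu_inv (g j)^-1%g) image_actE invgK; congr mu.
  by apply/seteqP; split => x /=;
    rewrite !configuration_Con configuration0 configurationS.
- by move=> C _.
- rewrite mean_sum_fibers // -muT; congr mu.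
  by apply/seteqP; split => x //= _; rewrite configuration_Con.
Qed.

End Configurations.

Lemma atomic_partition (X : Type) (x0 : X) (I : finType) (E : I -> set X) :
  exists m (part : X -> 'I_m), is_partition part /\
    forall i, exists P : pred 'I_m, E i = [set x | P (part x)].
Proof.
pose atom x : {ffun I -> bool} := [ffun i => `[< E i x >]].
pose atoms := [set t | `[< exists x, atom x = t >]].
have atom_in x : atom x \in atoms by rewrite inE; apply/asboolP; exists x.
pose part x := enum_rank_in (atom_in x0) (atom x).
have partK x : enum_val (part x) = atom x by rewrite enum_rankK_in.
exists #|atoms|, part; split.
  move=> k; have := enum_valP k; rewrite inE => /asboolP[x xk].
  by exists x; rewrite /part xk enum_valK_in.
move=> i; exists (fun k : 'I_#|atoms| => enum_val k i).
by apply/seteqP; split => x /=; rewrite partK ffunE => /asboolP.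
Qed.

Lemma finite_invariant_mean (G : groupType) (X : Type) (act : G -> X -> X)
    (x0 : X) :
  is_action act ->
  (forall n m (g : 'I_n -> G) (part : X -> 'I_m),
      is_partition part -> has_normalized_solution act g part) ->
  forall s : seq (G * set X), exists2 mu, mean mu &
    forall p, p \in s -> mu [set act p.1 x | x in p.2] = mu p.2.
Proof.
move=> hact hsol s; pose p_ (k : 'I_(size s)) := nth (1%g, set0) s k.
have [m [part [part_onto partE]]] := atomic_partition x0 (fun k => (p_ k).2).
pose g k := ((p_ k).1)^-1%g.
have [f f_sol] := hsol _ _ g part part_onto.
have [w wP] : {w & forall C,
    C \in Con act g part -> configuration act g part (w C) = C}.
  apply: (boolp.choice (P := fun C x =>
    C \in Con act g part -> configuration act g part x = C)) => C.
  have [/ConP[x xC]|_] := boolP (C \in Con act g part); first by exists x.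
  by exists x0.
have [_ f_ge0 f_sum1] := f_sol.
exists (dirac_combination (Con act g part) f w).
  exact: dirac_combination_mean.
move=> p ps; have ps' : (index p s < size s)%nat by rewrite index_mem.
have [P EP] := partE (Ordinal ps').
have := solution_dirac_combination_invariant f_sol wP (Ordinal ps') P.
rewrite /g /p_ /= nth_index // in EP * => inv.
by rewrite image_actE // EP.
Qed.

Lemma closed_eq_continuous (T : topologicalType) (p q : T -> R) :
  continuous p -> continuous q -> closed [set t | p t = q t].
Proof.
move=> p_cont q_cont.
have -> : [set t | p t = q t] = (fun t => p t - q t) @^-1` [set x | x = 0].
  apply/seteqP; split => t /=; first by move=> ->; rewrite subrr.
  by move/eqP; rewrite subr_eq0 => /eqP.
apply: (proj1 (continuous_closedP _)); last exact: closed_eq.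
by move=> t; apply: (@continuousB R R^o _ p q t (p_cont t) (q_cont t)).
Qed.

(* Combines the product topology with the pointed structure of functions, as
   [compact_In0] requires a [ptopologicalType]. *)
HB.instance Definition _ (X : Type) := Pointed.copy (set X -> R) (set X -> R).

Section CompactMeans.
Variable X : Type.

Lemma eval_continuous (A : set X) : continuous (fun mu : set X -> R => mu A).
Proof. exact: (@proj_continuous _ (fun _ => R) A). Qed.

Lemma closed_mean : closed [set mu : set X -> R | mean mu].
Proof.
have -> : [set mu | mean mu] =
    \bigcap_(A in setT) [set mu : set X -> R | 0 <= mu A] `&`
    [set mu | mu setT = 1] `&`
    \bigcap_(AB in [set AB | AB.1 `&` AB.2 = set0])
      [set mu | mu (AB.1 `|` AB.2) = mu AB.1 + mu AB.2].
  apply/seteqP; split => mu; rewrite /mean /=.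
    case=> mu_ge0 muT muD; split; last by case=> A B /= /muD.
    by split=> // A _; apply: mu_ge0.
  case=> -[mu_ge0 muT] muD; split=> [A|//|A B AB0]; first exact: mu_ge0.
  exact: (muD (A, B)).
apply: closedI; first apply: closedI.
- apply: closed_bigI => A _.
  exact: (proj1 (continuous_closedP _) (eval_continuous (A := A)) _
    (@closed_ge _ 0)).
- apply: closed_eq_continuous; [exact: eval_continuous | exact: cst_continuous].
- apply: closed_bigI => AB _.
  apply: closed_eq_continuous; first exact: eval_continuous.
  by move=> mu; apply: (@continuousD R R^o); apply: eval_continuous.
Qed.

Lemma compact_mean : compact [set mu : set X -> R | mean mu].
Proof.
apply: (subclosed_compact closed_mean
  (tychonoff (fun _ => @segment_compact R 0 1))).
by move=> mu mu_mean A; rewrite /= in_itv /= mean_le1 // andbT; case: mu_mean.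
Qed.

Lemma mean_of_finite_constraints (K : choiceType) (A B : K -> set X) :
  (forall s : seq K,
      exists2 mu, mean mu & forall i, i \in s -> mu (A i) = mu (B i)) ->
  exists2 mu, mean mu & forall i, mu (A i) = mu (B i).
Proof.
move=> finite_sat.
pose constraint (oi : option K) : set (set X -> R) :=
  if oi is Some i then [set mu | mu (A i) = mu (B i)] else setT.
have := compact_mean; rewrite compact_In0.
move=> /(_ _ setT (fun oi => [set mu | mean mu] `&` constraint oi)).
case=> [||mu mu_sat].
- exists constraint => // -[i|] _ /=; last exact: closedT.
  by apply: closed_eq_continuous; exact: eval_continuous.
- move=> D _.
  have [mu mu_mean muAB] := finite_sat (pmap id (finmap.enum_fset D)).
  exists mu => -[i|] /= iD; split=> //; apply: muAB.
  by rewrite mem_pmap map_id.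
- have [mu_mean _] := mu_sat None I.
  by exists mu => // i; have [_] := mu_sat (Some i) I.
Qed.

End CompactMeans.

Lemma amenable_of_normalized_solutions (G : groupType) (X : Type)
    (act : G -> X -> X) :
  is_action act ->
  (forall n m (g : 'I_n -> G) (part : X -> 'I_m),
      is_partition part -> has_normalized_solution act g part) ->
  amenable_action act.
Proof.
move=> hact hsol.
have [x0] : inhabited X.
  have [//|X0] := pselect (inhabited X).
  have part : X -> 'I_0 by move=> x; case: X0; exists.
  apply: (has_normalized_solution_inhabited
    (g := fun _ : 'I_0 => 1%g) (part := part)).
  by apply: hsol => -[].
have [mu mu_mean mu_inv] := mean_of_finite_constraints
  (A := fun p : G * set X => [set act p.1 x | x in p.2]) (B := snd)
  (finite_invariant_mean x0 hact hsol).
by apply/amenable_actionP; exists mu => // g E; apply: (mu_inv (g, E)).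
Qed.

Theorem mainTheorem1 (G : groupType) (X : Type) (act : G -> X -> X)
    (hfg : finitely_generated G) (hact : is_action act) :
  amenable_action act <->
  (forall (n m : nat) (g : 'I_n -> G) (part : X -> 'I_m),
      is_partition part -> has_normalized_solution act g part).
Proof.
split=> [/amenable_actionP[mu mu_mean mu_inv] n m g part _|].
  exact: invariant_mean_normalized_solution mu_mean mu_inv.
exact: amenable_of_normalized_solutions.
Qed.
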